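(* Let $\alpha\ge0$, $\rho\in\mathcal{R}_\alpha$, and $L_\rho(x):=x^\alpha\rho(x)$. Assume further that for every $\eta>0$ the function $x\mapsto x^\eta L_\rho(x)$ is eventually increasing and $x\mapsto x^{-\eta}L_\rho(x)$ is eventually decreasing. Then: (a) If $0\le\alpha<1$, $$\lim_{b\to\infty}\sup_{a\in[0,b)}\Big|\frac{I_\rho(b)-I_\rho(a)}{L_\rho(b)(b^{1-\alpha}-a^{1-\alpha})}-\frac1{1-\alpha}\Big|=0.$$ (b) If $\alpha>1$, $$\lim_{b\to\infty}\sup_{a\in(b,\infty)}\Big|\frac{I_\rho(a)-I_\rho(b)}{L_\rho(b)(b^{1-\alpha}-a^{1-\alpha})}-\frac1{\alpha-1}\Big|=0.$$
   Context: For $\alpha\ge0$, $\mathcal{R}_\alpha$ denotes the set of measurable functions $\rho:[0,\infty)\to(0,1]$ that are regularly varying of order $-\alpha$, i.e. $\lim_{t\to\infty}\rho(\lambda t)/\rho(t)=\lambda^{-\alpha}$ for every $\lambda>0$. $I_\rho(t):=\int_0^t\rho(s)ds$. *)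

From HB Require Import structures.
From mathcomp Require Import all_boot all_order all_algebra.
From mathcomp Require Import all_classical all_reals all_analysis.
Set Implicit Arguments. Unset Strict Implicit. Unset Printing Implicit Defensive.
Import Order.TTheory GRing.Theory Num.Theory.
Import numFieldNormedType.Exports.
Local Open Scope classical_set_scope.
Local Open Scope ring_scope.

Definition regvar {R : realType} (alpha : R) (rho : R -> R) : Prop :=
  measurable_fun (`[0%R, +oo[ : set R) rho /\
  (forall t : R, 0 <= t -> 0 < rho t <= 1) /\
  (forall lam : R, 0 < lam ->
     (fun t => rho (lam * t) / rho t) @ +oo --> lam `^ (- alpha)).

Definition Irho {R : realType} (rho : R -> R) (t : R) : R :=
  Rintegral lebesgue_measure `[0%R, t] rho.

Definition Lrho {R : realType} (alpha : R) (rho : R -> R) (x : R) : R :=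
  x `^ alpha * rho x.

Definition eventually_increasing {R : realType} (f : R -> R) : Prop :=
  exists M : R, forall x y, M <= x -> x <= y -> f x <= f y.

Definition eventually_decreasing {R : realType} (f : R -> R) : Prop :=
  exists M : R, forall x y, M <= x -> x <= y -> f y <= f x.

(* The monotonicity hypotheses are Potter bounds: for M <= s <= b (or b <= s)
   the ratio L(s)/L(b) lies between (s/b)^eta and (s/b)^-eta.  Since
   rho s = s^-alpha L(s), integrating these power-function bounds over the
   interval between a and b sandwiches the integral of rho over it between
   L(b) |b^(1-alpha) - a^(1-alpha)| / (|1-alpha| +- eta), so the quotient is
   within 2 eta / (1-alpha)^2 of its limit, uniformly in a as long as both
   endpoints are at least M.  For alpha < 1 the endpoints a < M only add a
   piece of I of size at most M and a term L(b) M^(1-alpha), both negligible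
   against L(b) b^(1-alpha) >= C b^(1-alpha-eta), which tends to infinity. *)

From mathcomp Require Import all_boot all_order all_algebra.
From mathcomp Require Import all_classical all_reals all_analysis.
From mathcomp Require Import ring lra.
Set Implicit Arguments.
Unset Strict Implicit.
Unset Printing Implicit Defensive.
Import Order.TTheory GRing.Theory Num.Theory.
Import numFieldNormedType.Exports.
Local Open Scope classical_set_scope.
Local Open Scope ring_scope.

Lemma ereal_sup_norm_cvg0 {R : realType} (S : R -> set R) (g : R -> R -> R) :
  (forall e : R, 0 < e -> \forall b \near +oo,
      (exists a, S b a) /\ forall a, S b a -> `|g b a| <= e) ->
  (fun b : R => ereal_sup [set (`|g b a|)%:E | a in S b]) @ +oo --> 0%E.
Proof.
move=> small.
have sup_between e : 0 < e -> \forall b \near +oo,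
    (0 <= ereal_sup [set (`|g b a|)%:E | a in S b] <= e%:E)%E.
  move=> e0; apply: filterS (small e e0) => b [[a0 Sa0] le_e].
  apply/andP; split.
    apply: le_trans (ereal_sup_ubound _); last by exists a0.
    by rewrite lee_fin.
  by apply: ge_ereal_sup => _ [a Sa <-]; rewrite lee_fin le_e.
have fin_between (x : \bar R) e : (0 <= x <= e%:E)%E -> x \is a fin_num.
  by move=> /andP[x0 xe]; rewrite ge0_fin_numE// (le_lt_trans xe) ?ltry.
apply/fine_cvgP; split.
  by apply: filterS (sup_between 1 ltr01) => b; exact: fin_between.
apply/cvgr0Pnorm_le => e e0.
apply: filterS (sup_between e e0) => b sup_e /=.
have /andP[h1 h2] := sup_e.
move: h1 h2; rewrite -(fineK (fin_between _ _ sup_e)) !lee_fin => h1 h2.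
by rewrite ger0_norm.
Qed.

Lemma ler_norm_divB {R : realFieldType} (J D c e : R) : 0 < D ->
  (`|J / D - c| <= e) = (`|J - D * c| <= e * D).
Proof.
move=> D0; have -> : J / D - c = (J - D * c) / D by field; rewrite gt_eqF.
by rewrite normrM [`|D^-1|]gtr0_norm ?invr_gt0// ler_pdivrMr.
Qed.

Lemma ltr_powRN {R : realType} (r x y : R) : 0 < r -> 0 < x -> x < y ->
  y `^ (- r) < x `^ (- r).
Proof.
move=> r0 x0 xy; have y0 := lt_trans x0 xy.
rewrite !powRN ltf_pV2 ?posrE ?powR_gt0//.
by apply: gt0_ltr_powR; rewrite // nnegrE ltW.
Qed.

Lemma affine_le_scaled_sqr {R : realFieldType} (k1 k2 c u : R) :
  0 <= k1 -> 0 <= k2 -> 0 < c -> 1 <= u -> (k1 + k2) / c <= u ->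
  k1 * u + k2 <= c * (u * u).
Proof.
move=> k10 k20 c0 u1; rewrite ler_pdivrMr// => ku.
have : (k1 + k2) * u <= u * c * u by apply: ler_wpM2r => //; lra.
nra.
Qed.

Lemma eventually_monotone_from {R : realType} (f g : R -> R) :
  eventually_increasing f -> eventually_decreasing g ->
  exists M, [/\ 0 < M, forall x y, M <= x -> x <= y -> f x <= f y
             & forall x y, M <= x -> x <= y -> g y <= g x].
Proof.
move=> [Mf incr] [Mg decr]; exists (Num.max 1 (Num.max Mf Mg)).
split=> [|x y|x y]; rewrite ?lt_max ?ltr01// !ge_max.
- by move=> /and3P[_ Mfx _]; exact: incr.
- by move=> /and3P[_ _ Mgx]; exact: decr.
Qed.

Lemma exists_small_eta {R : realFieldType} (p e : R) : 0 < p -> 0 < e ->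
  exists2 eta, 0 < eta & eta <= p / 2 /\ 2 * eta / (p * p) <= e.
Proof.
move=> p0 e0; exists (Num.min (p / 2) (e * (p * p) / 2)).
  by rewrite lt_min !divr_gt0// !mulr_gt0.
split; first by rewrite ge_min lexx.
rewrite ler_pdivrMr ?mulr_gt0//.
have : Num.min (p / 2) (e * (p * p) / 2) <= e * (p * p) / 2.
  by rewrite ge_min lexx orbT.
lra.
Qed.

Lemma ler_scaled_div {R : realFieldType} (c X Y k d : R) : 0 <= c -> 0 < d ->
  X <= k * Y -> c * X / d <= k * c * (Y / d).
Proof.
move=> c0 d0 XY; have -> : k * c * (Y / d) = c * (k * Y) / d by ring.
by apply: ler_wpM2r; [rewrite invr_ge0 ltW | exact: ler_wpM2l].
Qed.

Lemma ger_scaled_div {R : realFieldType} (c X Y k d : R) : 0 <= c -> 0 < d ->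
  k * Y <= X -> k * c * (Y / d) <= c * X / d.
Proof.
move=> c0 d0 YX; have -> : k * c * (Y / d) = c * (k * Y) / d by ring.
by apply: ler_wpM2r; [rewrite invr_ge0 ltW | exact: ler_wpM2l].
Qed.

Lemma divrBN {R : fieldType} (X Y d : R) : (X - Y) / d = (Y - X) / - d.
Proof. by rewrite invrN mulrN -mulNr opprB. Qed.

Section PowerFunctions.
Context {R : realType}.
Notation mu := (@lebesgue_measure R).

Lemma powRD_gt0 (x r s : R) : 0 < x -> x `^ (r + s) = x `^ r * x `^ s.
Proof. by move=> x0; rewrite powRD// (gt_eqF x0) implybT. Qed.

Lemma continuous_scaled_powR (c g x : R) : 0 < x ->
  {for x, continuous (fun y : R => c * y `^ g)}.
Proof.
move=> x0; apply: cvgMr.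
have : {for x, continuous (fun y : R => y `^ g)}.
  apply/differentiable_continuous/derivable1_diffP.
  by apply: derivable_powR; rewrite in_itv/= x0.
exact.
Qed.

Lemma within_continuous_scaled_powR (c g u v : R) : 0 < u ->
  {within `[u, v], continuous (fun y : R => c * y `^ g)}.
Proof.
move=> u0; apply: continuous_in_subspaceT => x.
rewrite inE/= in_itv/= => /andP[ux _].
exact: continuous_scaled_powR (lt_le_trans u0 ux).
Qed.

Lemma integral_scaled_powR (c g u v : R) : 0 < u -> u <= v -> g + 1 != 0 ->
  \int[mu]_(x in `[u, v]) (c * x `^ g) =
  c * ((v `^ (g + 1) - u `^ (g + 1)) / (g + 1)).
Proof.
move=> u0; rewrite le_eqVlt => /predU1P[<- _|uv g1].
  by rewrite set_itv1 Rintegral_set1 subrr mul0r mulr0.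
pose F y := c / (g + 1) * y `^ (g + 1).
have dF (x : R) : 0 < x -> is_derive x 1 F (c * x `^ g).
  move=> x0.
  have := @is_deriveZ R R^o R^o _ (c / (g + 1)) x 1 _ (is_derive1_powR (g + 1) x0).
  by rewrite addrK /GRing.scale /= mulrA divfK.
have u_lt (x : R) : x \in `]u, v[ -> 0 < x by rewrite in_itv/= => /andP[/(lt_trans u0)].
rewrite /Rintegral (@continuous_FTC2 _ _ F).
- by rewrite /F /= mulrA -mulrBr mulrAC.
- exact: uv.
- exact: within_continuous_scaled_powR.
- split.
  + by move=> x /u_lt /dF [].
  + exact/cvg_at_right_filter/continuous_scaled_powR.
  + exact/cvg_at_left_filter/continuous_scaled_powR/(lt_trans u0).
- by move=> x /u_lt /dF [_ Dx]; rewrite derive1E Dx.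
Qed.

Lemma scaled_powRB_le (q s x r y : R) : 0 < x -> x <= r -> r <= y -> 0 <= s ->
  r `^ s * (y `^ (q - s) - x `^ (q - s)) <= y `^ q - x `^ q.
Proof.
move=> x0 xr ry s0; have r0 := lt_le_trans x0 xr; have y0 := lt_le_trans r0 ry.
have pow_le a b : 0 < a -> a <= b -> a `^ s <= b `^ s.
  move=> a0 ab; apply: ge0_ler_powR => //; rewrite nnegrE ltW//.
  exact: lt_le_trans ab.
have split_pow z : 0 < z -> z `^ q = z `^ s * z `^ (q - s).
  by move=> z0; rewrite -powRD_gt0// addrC subrK.
rewrite mulrBr (split_pow y y0) (split_pow x x0) lerB//.
- by apply: ler_wpM2r; [exact: powR_ge0 | exact: pow_le].
- by apply: ler_wpM2r; [exact: powR_ge0 | exact: pow_le].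
Qed.

Lemma scaled_powRB_ge (q s x r y : R) : 0 < x -> x <= r -> r <= y -> 0 <= s ->
  y `^ q - x `^ q <= r `^ (- s) * (y `^ (q + s) - x `^ (q + s)).
Proof.
move=> x0 xr ry s0; have rs0 : 0 < r `^ s by rewrite powR_gt0 // (lt_le_trans x0).
rewrite powRN ler_pdivlMl//.
by have := scaled_powRB_le (q + s) x0 xr ry s0; rewrite addrK.
Qed.

Lemma sandwich_ratio_dist (J D p e : R) : 0 < D -> 0 < e -> e <= p / 2 ->
  D / (p + e) <= J -> J <= D / (p - e) -> `|J / D - p^-1| <= 2 * e / (p * p).
Proof.
move=> D0 e0 ep lo hi.
have p0 : 0 < p by lra.
have pe0 : 0 < p - e by lra.
set x := J / D.
have x_lo : 1 <= x * (p + e).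
  by rewrite /x mulrAC ler_pdivlMr// mul1r -ler_pdivrMr// addr_gt0.
have x_hi : x * (p - e) <= 1.
  by rewrite /x mulrAC ler_pdivrMr// mul1r -ler_pdivlMr.
have x0 : 0 < x by rewrite /x divr_gt0// (lt_le_trans _ lo)// divr_gt0// addr_gt0.
have xe : x * e <= 2 * e / p.
  rewrite ler_pdivlMr// mulrAC; apply: ler_wpM2r; first exact: ltW.
  have : x * (p / 2) <= 1 by apply: le_trans x_hi; apply: ler_wpM2l; lra.
  lra.
have -> : x - p^-1 = (x * p - 1) / p by field; rewrite gt_eqF.
have -> : 2 * e / (p * p) = 2 * e / p / p by rewrite invfM mulrA.
rewrite normrM [`|p^-1|]ger0_norm ?invr_ge0; last exact: ltW.
rewrite ler_pM2r ?invr_gt0//.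
rewrite mulrDr mulrBr in x_lo x_hi.
rewrite ler_norml; apply/andP; split; lra.
Qed.

End PowerFunctions.

Section IntegralOfRho.
Context {R : realType} (alpha : R) (rho : R -> R).
Hypothesis rho_regvar : regvar alpha rho.
Notation mu := (@lebesgue_measure R).
Local Notation L := (Lrho alpha rho).
Local Notation I := (Irho rho).

Lemma rho_gt0_le1 {t : R} : 0 <= t -> 0 < rho t <= 1.
Proof. by have [_ [rho01 _]] := rho_regvar; exact: rho01. Qed.

Lemma integrable_rho (u v : R) : 0 <= u -> mu.-integrable `[u, v] (EFin \o rho).
Proof.
move=> u0; have [rho_mes _] := rho_regvar.
have sub : `[u, v] `<=` `[0, +oo[.
  by move=> x /=; rewrite !in_itv/= andbT => /andP[ux _]; exact: le_trans ux.
apply: measurable_bounded_integrable => //.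
- exact: compact_finite_measure (@segment_compact R u v).
- exact: measurable_funS _ sub rho_mes.
- exists 1; split => // M M1 x /sub /=; rewrite in_itv/= andbT => x0.
  have /andP[r0 r1] := rho_gt0_le1 x0.
  by rewrite ger0_norm ?ltW//; exact: le_lt_trans r1 M1.
Qed.

Lemma IrhoB (u v : R) : 0 <= u -> u <= v -> I v - I u = \int[mu]_(x in `[u, v]) rho x.
Proof.
move=> u0 uv; rewrite /Irho Rintegral_itvB ?bnd_simp//; last exact: integrable_rho.
rewrite Rintegral_itv_obnd_cbnd//.
apply: integrableS (integrable_rho v u0) => //.
by move=> x; apply: subset_itvr; rewrite bnd_simp.
Qed.

Lemma IrhoB_bounds (u v : R) : 0 <= u -> u <= v -> 0 <= I v - I u <= v - u.
Proof.
move=> u0 uv; rewrite IrhoB//.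
have rho_on (s : R) : `[u, v]%classic s -> 0 < rho s <= 1.
  by rewrite /= in_itv/= => /andP[us _]; exact/rho_gt0_le1/(le_trans u0 us).
apply/andP; split.
  by apply: Rintegral_ge0 => s /rho_on /andP[/ltW].
apply: le_trans (_ : \int[mu]_(x in `[u, v]) cst 1 x <= _).
  apply: le_Rintegral => //; first exact: integrable_rho.
    apply: continuous_compact_integrable; first exact: segment_compact.
    exact/continuous_subspaceT/cst_continuous.
  by move=> s /rho_on /andP[].
rewrite Rintegral_cst// mul1r.
have /= -> := lebesgue_measure_itv `[u, v].
by rewrite lte_fin; case: ltP => //=; rewrite subr_ge0.
Qed.

Lemma Lrho_gt0 {x : R} : 0 < x -> 0 < L x.
Proof. by move=> x0; rewrite mulr_gt0 ?powR_gt0//; case/andP: (rho_gt0_le1 (ltW x0)). Qed.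

Lemma rho_eq_powR_Lrho (sigma s : R) : 0 < s ->
  rho s = s `^ (sigma - alpha) * (s `^ (- sigma) * L s).
Proof.
move=> s0; rewrite /Lrho !mulrA -!powRD_gt0//.
by rewrite (_ : _ + _ + _ = 0) ?powRr0 ?mul1r//; ring.
Qed.

Lemma IrhoB_ge_scaled_powR (c g u v : R) : 0 < u -> u <= v -> g + 1 != 0 ->
  (forall s, u <= s -> s <= v -> c * s `^ g <= rho s) ->
  c * ((v `^ (g + 1) - u `^ (g + 1)) / (g + 1)) <= I v - I u.
Proof.
move=> u0 uv g1 le_rho; rewrite IrhoB ?(ltW u0)// -integral_scaled_powR//.
apply: le_Rintegral => //; last first.
- by move=> s /=; rewrite in_itv/= => /andP[]; exact: le_rho.
- exact: integrable_rho (ltW u0).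
- apply: continuous_compact_integrable; first exact: segment_compact.
  exact: within_continuous_scaled_powR.
Qed.

Lemma IrhoB_le_scaled_powR (c g u v : R) : 0 < u -> u <= v -> g + 1 != 0 ->
  (forall s, u <= s -> s <= v -> rho s <= c * s `^ g) ->
  I v - I u <= c * ((v `^ (g + 1) - u `^ (g + 1)) / (g + 1)).
Proof.
move=> u0 uv g1 rho_le; rewrite IrhoB ?(ltW u0)// -integral_scaled_powR//.
apply: le_Rintegral => //; last first.
- by move=> s /=; rewrite in_itv/= => /andP[]; exact: rho_le.
- apply: continuous_compact_integrable; first exact: segment_compact.
  exact: within_continuous_scaled_powR.
- exact: integrable_rho (ltW u0).
Qed.

Section Potter.
Variables (eta M : R).
Hypotheses (eta_gt0 : 0 < eta) (M_gt0 : 0 < M).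
Hypothesis L_incr :
  forall x y, M <= x -> x <= y -> x `^ eta * L x <= y `^ eta * L y.
Hypothesis L_decr :
  forall x y, M <= x -> x <= y -> y `^ (- eta) * L y <= x `^ (- eta) * L x.

Lemma rho_potter_right (s b : R) : M <= s -> s <= b ->
  b `^ (- eta) * L b * s `^ (eta - alpha) <= rho s
  <= b `^ eta * L b * s `^ (- eta - alpha).
Proof.
move=> Ms sb; have s0 := lt_le_trans M_gt0 Ms.
apply/andP; split; rewrite mulrC.
  by rewrite (rho_eq_powR_Lrho eta s0) ler_pM2l ?powR_gt0// L_decr.
by rewrite (rho_eq_powR_Lrho (- eta) s0) opprK ler_pM2l ?powR_gt0// L_incr.
Qed.

Lemma rho_potter_left (b s : R) : M <= b -> b <= s ->
  b `^ eta * L b * s `^ (- eta - alpha) <= rho s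
  <= b `^ (- eta) * L b * s `^ (eta - alpha).
Proof.
move=> Mb bs; have s0 := lt_le_trans M_gt0 (le_trans Mb bs).
apply/andP; split; rewrite mulrC.
  by rewrite (rho_eq_powR_Lrho (- eta) s0) opprK ler_pM2l ?powR_gt0// L_incr.
by rewrite (rho_eq_powR_Lrho eta s0) ler_pM2l ?powR_gt0// L_decr.
Qed.

Lemma Irho_ratio_dist_lt1 (a b : R) : eta <= (1 - alpha) / 2 -> M <= a -> a < b ->
  `|(I b - I a) / (L b * (b `^ (1 - alpha) - a `^ (1 - alpha)))
    - (1 - alpha)^-1| <= 2 * eta / ((1 - alpha) * (1 - alpha)).
Proof.
move=> ep Ma ab; set p := 1 - alpha in ep *.
have p0 : 0 < p by have := eta_gt0; lra.
have a0 := lt_le_trans M_gt0 Ma; have b0 := lt_trans a0 ab.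
have Lb0 := Lrho_gt0 b0.
have rho_ab s (ha : a <= s) (hb : s <= b) := rho_potter_right (le_trans Ma ha) hb.
have lo := IrhoB_ge_scaled_powR a0 (ltW ab) _
  (fun s ha hb => proj1 (andP (rho_ab s ha hb))).
have hi := IrhoB_le_scaled_powR a0 (ltW ab) _
  (fun s ha hb => proj2 (andP (rho_ab s ha hb))).
rewrite (_ : eta - alpha + 1 = p + eta) in lo; last by rewrite /p; ring.
rewrite (_ : - eta - alpha + 1 = p - eta) in hi; last by rewrite /p; ring.
apply: sandwich_ratio_dist => //.
- by rewrite mulr_gt0// subr_gt0 gt0_ltr_powR// nnegrE ltW.
- apply: le_trans (lo _) => //; last by rewrite gt_eqF// addr_gt0.
  apply: ler_scaled_div; [exact: ltW | exact: addr_gt0 |].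
  exact: scaled_powRB_ge (ltW ab) (lexx b) (ltW eta_gt0).
- apply: le_trans (hi _) _; first by rewrite gt_eqF// subr_gt0; lra.
  apply: ger_scaled_div; [exact: ltW | rewrite subr_gt0; lra |].
  exact: scaled_powRB_le (ltW ab) (lexx b) (ltW eta_gt0).
Qed.

Lemma Irho_ratio_dist_gt1 (a b : R) : eta <= (alpha - 1) / 2 -> M <= b -> b < a ->
  `|(I a - I b) / (L b * (b `^ (1 - alpha) - a `^ (1 - alpha)))
    - (alpha - 1)^-1| <= 2 * eta / ((alpha - 1) * (alpha - 1)).
Proof.
move=> ep Mb ba; set p := alpha - 1 in ep *; set q := 1 - alpha.
have p0 : 0 < p by have := eta_gt0; lra.
have alpha_gt1 : 1 < alpha by move: p0; rewrite /p; lra.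
have b0 := lt_le_trans M_gt0 Mb; have a0 := lt_trans b0 ba.
have Lb0 := Lrho_gt0 b0.
have rho_ba s (hb : b <= s) (ha : s <= a) := rho_potter_left Mb hb.
have lo := IrhoB_ge_scaled_powR b0 (ltW ba) _
  (fun s hb ha => proj1 (andP (rho_ba s hb ha))).
have hi := IrhoB_le_scaled_powR b0 (ltW ba) _
  (fun s hb ha => proj2 (andP (rho_ba s hb ha))).
rewrite (_ : - eta - alpha + 1 = q - eta) in lo; last by rewrite /q; ring.
rewrite (_ : eta - alpha + 1 = q + eta) in hi; last by rewrite /q; ring.
rewrite divrBN (_ : - (q - eta) = p + eta) in lo; last by rewrite /p /q; ring.
rewrite divrBN (_ : - (q + eta) = p - eta) in hi; last by rewrite /p /q; ring.
have neg_diff (X Y Z : R) : Z * (X - Y) = - (Z * (Y - X)) by rewrite -mulrN opprB.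
apply: sandwich_ratio_dist => //.
- rewrite mulr_gt0// subr_gt0 (_ : q = - p); last by rewrite /p /q; ring.
  exact: ltr_powRN.
- apply: le_trans (lo _); last by rewrite lt_eqF// /q; have := eta_gt0; lra.
  apply: ler_scaled_div; [exact: ltW | exact: addr_gt0 |].
  rewrite neg_diff -[b `^ q - _]opprB lerN2.
  exact: scaled_powRB_le (lexx b) (ltW ba) (ltW eta_gt0).
- apply: le_trans (hi _) _; first by rewrite lt_eqF// /q; move: ep; rewrite /p; lra.
  apply: ger_scaled_div; [exact: ltW | rewrite subr_gt0; lra |].
  rewrite neg_diff -[b `^ q - _]opprB lerN2.
  exact: scaled_powRB_ge (lexx b) (ltW ba) (ltW eta_gt0).
Qed.

Lemma Irho_ratio_dist_lt1_near0 (a b e : R) : eta <= (1 - alpha) / 2 ->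
  2 * eta / ((1 - alpha) * (1 - alpha)) <= e / 2 ->
  0 <= a -> a < M -> M < b ->
  M / L b + M `^ (1 - alpha) / (1 - alpha)
    <= e / 2 * (b `^ (1 - alpha) - M `^ (1 - alpha)) ->
  `|(I b - I a) / (L b * (b `^ (1 - alpha) - a `^ (1 - alpha)))
    - (1 - alpha)^-1| <= e.
Proof.
(* Split I b - I a at M: beyond M the Potter sandwich applies, and the part
   below M is at most M + L b M^p / p, which the last hypothesis absorbs. *)
move=> ep he a0 aM Mb tail; have far := Irho_ratio_dist_lt1 ep (lexx M) Mb.
set p := 1 - alpha in ep he tail far *.
have p0 : 0 < p by have := eta_gt0; lra.
have b0 := lt_trans M_gt0 Mb; have Lb0 := Lrho_gt0 b0.
have e0 : 0 <= e.
  suff : 0 <= 2 * eta / (p * p) by lra.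
  by rewrite divr_ge0 ?mulr_ge0// ltW.
have /andP[K0 KM] := IrhoB_bounds a0 (ltW aM).
have pow_le x y : 0 <= x -> x <= y -> x `^ p <= y `^ p.
  by move=> x0 xy; apply: ge0_ler_powR; rewrite // ?nnegrE ?(le_trans x0 xy)// ltW.
have aMp := pow_le _ _ a0 (ltW aM); have ap0 := powR_ge0 a p.
have Mbp : M `^ p < b `^ p.
  by apply: gt0_ltr_powR; rewrite // nnegrE ltW// (lt_trans M_gt0).
set DM := L b * (b `^ p - M `^ p) in far *.
have DM0 : 0 < DM by rewrite mulr_gt0// subr_gt0.
have DMa : DM <= L b * (b `^ p - a `^ p).
  by rewrite ler_pM2l// lerD2l lerN2.
rewrite ler_norm_divB// in far; rewrite ler_norm_divB; last exact: lt_le_trans DMa.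
have near : `|I M - I a - L b * (M `^ p - a `^ p) / p| <= M + L b * M `^ p / p.
  have : 0 <= L b * (M `^ p - a `^ p) / p <= L b * M `^ p / p.
    apply/andP; split.
      by apply: divr_ge0; [apply: mulr_ge0; [exact: ltW | rewrite subr_ge0] | exact: ltW].
    by rewrite ler_pM2r ?invr_gt0// ler_pM2l// gerBl.
  by rewrite ler_norml => /andP[? ?]; apply/andP; split; lra.
have tailDM : M + L b * M `^ p / p <= e / 2 * DM.
  have := ler_wpM2l (ltW Lb0) tail.
  by rewrite mulrDr mulrCA divff ?gt_eqF// mulr1 mulrA mulrCA.
have -> : I b - I a - L b * (b `^ p - a `^ p) * p^-1
  = (I b - I M - DM * p^-1) + (I M - I a - L b * (M `^ p - a `^ p) / p).
  by rewrite /DM; ring.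
apply: le_trans (ler_normD _ _) _.
have : e * DM <= e * (L b * (b `^ p - a `^ p)) by exact: ler_wpM2l.
have : 2 * eta / (p * p) * DM <= e / 2 * DM by rewrite ler_pM2r.
lra.
Qed.

Lemma tail_condition_lt1 (e : R) : eta <= (1 - alpha) / 2 -> 0 < e ->
  \forall b \near +oo, M / L b + M `^ (1 - alpha) / (1 - alpha)
    <= e / 2 * (b `^ (1 - alpha) - M `^ (1 - alpha)).
Proof.
(* L b >= C b^-eta with C := M^eta L M, and b^eta <= u := b^(p/2), so the
   claim reduces to k1 u + k2 <= e/2 u^2 for large u. *)
move=> ep e0; set p := 1 - alpha in ep *.
have p0 : 0 < p by have := eta_gt0; lra.
have e20 : 0 < e / 2 by rewrite divr_gt0.
have C0 : 0 < M `^ eta * L M by rewrite mulr_gt0 ?powR_gt0 ?Lrho_gt0.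
set k1 := M / (M `^ eta * L M); set k2 := M `^ p / p + e / 2 * M `^ p.
have k10 : 0 <= k1 by rewrite divr_ge0// ltW.
have k20 : 0 <= k2.
  by apply: addr_ge0; [apply: divr_ge0 | apply: mulr_ge0];
    rewrite ?powR_ge0 ?(ltW p0) ?(ltW e20).
set U := Num.max 1 ((k1 + k2) / (e / 2)).
apply: filterS (nbhs_pinfty_ge (num_real (Num.max 1 (Num.max M (U `^ (2 / p)))))).
move=> b; rewrite !ge_max => /and3P[b1 Mb Ub].
have b0 : 0 < b by lra.
have U1 : 1 <= U by rewrite le_max lexx.
set u := b `^ (p / 2).
have bp : b `^ p = u * u by rewrite /u -powRD_gt0// -splitr.
have Uu : U <= u.
  have -> : U = (U `^ (2 / p)) `^ (p / 2).
    rewrite -powRrM (_ : 2 / p * (p / 2) = 1) ?powRr1//; first lra.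
    by field; rewrite gt_eqF.
  by apply: ge0_ler_powR; rewrite ?nnegrE ?powR_ge0 ?divr_ge0 ?(ltW p0)// ltW.
have u1 : 1 <= u := le_trans U1 Uu.
have Lb_lo : M `^ eta * L M <= b `^ eta * L b := L_incr (lexx M) Mb.
have k1u : M / L b <= k1 * u.
  rewrite ler_pdivrMr ?Lrho_gt0//.
  apply: le_trans (_ : k1 * (b `^ eta * L b) <= _).
    by rewrite /k1 mulrAC ler_pdivlMr// ler_pM2l.
  rewrite mulrA ler_pM2r ?Lrho_gt0// ler_pM2l ?divr_gt0 ?powR_gt0 ?Lrho_gt0//.
  by rewrite /u ler_powR.
have k12U : (k1 + k2) / (e / 2) <= U by rewrite le_max lexx orbT.
have := affine_le_scaled_sqr k10 k20 e20 u1 (le_trans k12U Uu).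
rewrite bp /k2; lra.
Qed.

End Potter.
End IntegralOfRho.

Theorem lemma2p8 (R : realType) (alpha : R) (rho : R -> R) :
  0 <= alpha -> regvar alpha rho ->
  (forall eta : R, 0 < eta ->
     eventually_increasing (fun x => x `^ eta * Lrho alpha rho x) /\
     eventually_decreasing (fun x => x `^ (- eta) * Lrho alpha rho x)) ->
  (alpha < 1 ->
     (fun b : R => ereal_sup
        [set (`| (Irho rho b - Irho rho a) /
                 (Lrho alpha rho b * (b `^ (1 - alpha) - a `^ (1 - alpha)))
               - (1 - alpha)^-1 |)%:E | a in `[0%R, b[ ])
       @ +oo --> 0%E) /\
  (1 < alpha ->
     (fun b : R => ereal_sup
        [set (`| (Irho rho a - Irho rho b) /
                 (Lrho alpha rho b * (b `^ (1 - alpha) - a `^ (1 - alpha)))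
               - (alpha - 1)^-1 |)%:E | a in `]b, +oo[ ])
       @ +oo --> 0%E).
Proof.
move=> _ rho_regvar potter; split=> [alpha_lt1 | alpha_gt1];
  apply: ereal_sup_norm_cvg0 => e e0.
- have p0 : 0 < 1 - alpha by lra.
  have e20 : 0 < e / 2 by rewrite divr_gt0.
  have [eta eta0 [ep he]] := exists_small_eta p0 e20.
  have [incr decr] := potter eta eta0.
  have [M [M0 L_incr L_decr]] := eventually_monotone_from incr decr.
  have tail := tail_condition_lt1 rho_regvar eta0 M0 L_incr ep e0.
  apply: filterS2 (nbhs_pinfty_gt (num_real M)) tail => b Mb tail_b.
  split=> [|a]; first by exists 0; rewrite /= in_itv/= lexx; lra.
  rewrite /= in_itv/= => /andP[a0 ab]; have [Ma|aM] := leP M a.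
  + apply: le_trans (Irho_ratio_dist_lt1 rho_regvar eta0 M0 L_incr L_decr ep Ma ab) _.
    by apply: le_trans he _; rewrite ler_pdivrMr// ler_peMr//; lra.
  + exact: (Irho_ratio_dist_lt1_near0 rho_regvar eta0 M0 L_incr L_decr ep he a0 aM Mb tail_b).
- have p0 : 0 < alpha - 1 by lra.
  have [eta eta0 [ep he]] := exists_small_eta p0 e0.
  have [incr decr] := potter eta eta0.
  have [M [M0 L_incr L_decr]] := eventually_monotone_from incr decr.
  apply: filterS (nbhs_pinfty_ge (num_real M)) => b Mb.
  split=> [|a]; first by exists (b + 1); rewrite /= in_itv/= andbT; lra.
  rewrite /= in_itv/= andbT => ba.
  exact: le_trans (Irho_ratio_dist_gt1 rho_regvar eta0 M0 L_incr L_decr ep Mb ba) he.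
Qed.
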